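(* $(\mathbb{S},\tau^{-1})$ is a final coalgebra for $M\otimes-\colon\mathsf{SquaSet}\to\mathsf{SquaSet}$.
   Context: Let $M_0=\{(r,s)\in[0,1]^2: r\in\{0,1\}\text{ or } s\in\{0,1\}\}$. A square set is a pair $(X,S_X)$ with $X$ a set and $S_X\colon M_0\to X$ injective; $\mathsf{SquaSet}$ has square sets as objects and maps $f$ with $f\circ S_X=S_Y$ as morphisms. Let $N=\{0,1,2\}^2$, $M=N\setminus\{(1,1)\}$, also viewed as points of $\mathbb{R}^2$. For a square set $X$, $M\otimes X=(M\times X)/\!\sim$, where $\sim$ is the equivalence relation generated by $(m,S_X(p))\sim(n,S_X(q))$ whenever $m,n\in M$ differ by exactly $1$ in exactly one coordinate and $(m+p)/3=(n+q)/3$; $m\otimes x$ denotes the class of $(m,x)$; $S_{M\otimes X}(p)=m\otimes S_X(3p-m)$ for any $m\in M$ with $p\in(m+[0,1]^2)/3$; $(M\otimes f)(m\otimes x)=m\otimes f(x)$. The Sierpinski carpet $\mathbb{S}$ is the unique nonempty compact $K\subseteq[0,1]^2$ with $K=\bigcup_{m\in M}\frac13(m+K)$, with $S_{\mathbb{S}}$ the inclusion of $M_0$. $\tau\colon M\otimes\mathbb{S}\to\mathbb{S}$, $\tau(m\otimes s)=\frac13(m+s)$, is a bijection. A coalgebra is $(A,a\colon A\to FA)$; a final coalgebra admits a unique coalgebra morphism $h$ (with $b\circ h=Fh\circ a$) from every coalgebra. *)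

From HB Require Import structures.
From mathcomp Require Import all_boot all_order all_algebra.
From mathcomp Require Import all_classical all_reals all_analysis.
From mathcomp Require Import Rstruct Rstruct_topology.
From mathcomp Require Import lra.
From Stdlib Require Import ClassicalEpsilon ProofIrrelevance Relations.

Set Implicit Arguments.
Unset Strict Implicit.
Unset Printing Implicit Defensive.
Import Order.TTheory GRing.Theory Num.Theory.

Local Open Scope ring_scope.
Local Open Scope classical_set_scope.

Section Defs.
Variable R : realType.

Definition pt := (R * R)%type.

Definition unitsq : set pt := [set p | (0 <= p.1 <= 1) && (0 <= p.2 <= 1)].
Definition M0 : set pt :=
  [set p | unitsq p /\ (p.1 = 0 \/ p.1 = 1 \/ p.2 = 0 \/ p.2 = 1)].
Definition M0pt := {p : pt | M0 p}.

Record squaSet := SquaSet {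
  sq_car :> Type;
  sq : M0pt -> sq_car;
  sq_inj : injective sq }.

Definition sqmor (X Y : squaSet) (f : X -> Y) : Prop :=
  forall p, f (sq X p) = sq Y p.

Definition Mty := {m : nat * nat | [&& (m.1 < 3)%N, (m.2 < 3)%N & m != (1, 1)%N]}.
Definition mR (m : Mty) : pt := (((val m).1)%:R, ((val m).2)%:R).

Definition adjacent (m n : Mty) : Prop :=
  let a := val m in let b := val n in
  ((a.1.+1 = b.1 \/ b.1.+1 = a.1) /\ a.2 = b.2) \/
  (a.1 = b.1 /\ (a.2.+1 = b.2 \/ b.2.+1 = a.2)).

Definition contract (m : Mty) (p : pt) : pt :=
  (((mR m).1 + p.1) / 3, ((mR m).2 + p.2) / 3).

(* the cell index of p: some m with p \in (m + [0,1]^2)/3 *)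
Definition cidx (r : R) : nat :=
  if r < 1/3 then 0%N else if r < 2/3 then 1%N else 2%N.

Lemma cidx_lt3 r : (cidx r < 3)%N.
Proof. by rewrite /cidx; case: ifP => //; case: ifP. Qed.

Lemma cidx0 : cidx 0 = 0%N.
Proof. by rewrite /cidx ifT //; lra. Qed.

Lemma cidx1 : cidx 1 = 2%N.
Proof. by rewrite /cidx ifF; [rewrite ifF // |]; apply/negbTE; rewrite -leNgt; lra. Qed.

Lemma cidx_bound r : 0 <= r <= 1 ->
  0 <= 3 * r - (cidx r)%:R <= 1.
Proof.
move=> /andP[r0 r1]; rewrite /cidx.
case: ifP => [h|/negbT]; first by apply/andP; split; lra.
rewrite -leNgt => h1; case: ifP => [h|/negbT]; first by apply/andP; split; lra.
by rewrite -leNgt => h2; apply/andP; split; lra.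
Qed.

Lemma cell_ok (p : M0pt) :
  [&& (cidx (proj1_sig p).1 < 3)%N, (cidx (proj1_sig p).2 < 3)%N &
      (cidx (proj1_sig p).1, cidx (proj1_sig p).2) != (1, 1)%N].
Proof.
rewrite !cidx_lt3 /=; case: p => p [_ hb] /=.
by case: hb => [->|[->|[->|->]]]; rewrite ?cidx0 ?cidx1 // xpair_eqE ?andbF.
Qed.

Definition cell (p : M0pt) : Mty :=
  exist (fun m : nat * nat => is_true [&& (m.1 < 3)%N, (m.2 < 3)%N & m != (1, 1)%N])
    (cidx (proj1_sig p).1, cidx (proj1_sig p).2) (cell_ok p).

Definition resc (p : pt) (m : Mty) : pt :=
  (3 * p.1 - (mR m).1, 3 * p.2 - (mR m).2).

Lemma resc_ok (p : M0pt) : M0 (resc (proj1_sig p) (cell p)).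
Proof.
case: p => p hp; have [/andP[h1 h2] hb] := hp; rewrite /M0 /resc /mR /cell /=; split.
  rewrite /unitsq /=.
  by apply/andP; split; apply: cidx_bound.
case: hb => [->|[->|[->|->]]]; rewrite ?cidx0 ?cidx1.
- by left; rewrite mulr0 subr0.
- by right; left; rewrite mulr1; lra.
- by right; right; left; rewrite mulr0 subr0.
- by right; right; right; rewrite mulr1; lra.
Qed.

Section Tensor.
Variable X : squaSet.

Definition gen (a b : Mty * X) : Prop :=
  exists (m n : Mty) (p q : M0pt),
    a = (m, sq X p) /\ b = (n, sq X q) /\ adjacent m n /\
    contract m (proj1_sig p) = contract n (proj1_sig q).

Definition eqv : Mty * X -> Mty * X -> Prop := clos_refl_sym_trans _ gen.

(* M (x) X = (M x X)/~ , as the type of equivalence classes *)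
Definition MX := {P : Mty * X -> Prop | exists a, P = eqv a}.

Definition tens (m : Mty) (x : X) : MX :=
  exist _ (eqv (m, x)) (ex_intro _ (m, x) erefl).

Definition repr (c : MX) : Mty * X :=
  proj1_sig (constructive_indefinite_description _ (proj2_sig c)).

(* S_{M (x) X}(p) = m (x) S_X(3p - m) for (a chosen) m with p in (m+[0,1]^2)/3 *)
Definition sqMX (p : M0pt) : MX :=
  tens (cell p) (sq X (exist _ _ (resc_ok p))).

End Tensor.

Definition Mmap (X Y : squaSet) (f : X -> Y) (c : MX X) : MX Y :=
  tens (repr c).1 (f (repr c).2).

Definition is_final_coalg (Z : squaSet) (z : Z -> MX Z) : Prop :=
  (forall p, z (sq Z p) = sqMX Z p) /\
  forall (A : squaSet) (a : A -> MX A),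
    (forall p, a (sq A p) = sqMX A p) ->
    exists! h : A -> Z, sqmor h /\ forall x, z (h x) = Mmap h (a x).

Definition hutch (K : set pt) : set pt :=
  \bigcup_(m in [set: Mty]) (contract m @` K).

Section Carpet.
Variables (K : set pt) (hM0 : M0 `<=` K).

Definition Kt := {p : pt | K p}.
Definition sqK (p : M0pt) : Kt := exist _ (proj1_sig p) (hM0 (proj2_sig p)).

Lemma sqK_inj : injective sqK.
Proof.
move=> [p hp] [q hq] /(congr1 (@proj1_sig _ _)) /= epq.
by move: hp hq; rewrite epq => hp hq; rewrite (proof_irrelevance _ hp hq).
Qed.

Definition carpetSq : squaSet := SquaSet sqK_inj.

Variable hfix : K = hutch K.

Lemma tau_in (c : MX carpetSq) : K (contract (repr c).1 (proj1_sig (repr c).2)).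
Proof.
have hK := proj2_sig (repr c).2.
have : hutch K (contract (repr c).1 (proj1_sig (repr c).2)).
  by exists (repr c).1 => //; exists (proj1_sig (repr c).2).
by rewrite -hfix.
Qed.

Definition tau (c : MX carpetSq) : carpetSq := exist _ _ (tau_in c).

End Carpet.
End Defs.
Arguments tau {R K} hM0 hfix c.

From Pilot Require Import Defs.
From mathcomp Require Import all_boot all_classical all_reals all_analysis.
From mathcomp Require Import Rstruct Rstruct_topology.
From mathcomp Require Import all_order all_algebra lra zify.
From Stdlib Require Import ClassicalEpsilon Relations.
Import Order.TTheory GRing.Theory Num.Theory numFieldNormedType.Exports.

Set Implicit Arguments.
Unset Strict Implicit.
Unset Printing Implicit Defensive.

Local Open Scope classical_set_scope.
Local Open Scope ring_scope.

(* A coalgebra a : A -> M (x) A unfolds each x into an address m_0 m_1 m_2 ... in M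
   (through chosen representatives), and the morphism into the carpet must send x to
   the point with that address, sum_k m_k 3^-(k+1), computed coordinatewise as a
   ternary expansion.  Everything else rests on one contraction principle: two families
   of points of [0,1]^2 that are self-similar along the same addresses coincide, as
   their distance shrinks by a factor 3 at every step; and a family that is
   self-similar along some addresses lies in K, being approximated to within 3^-n by
   points of K = U_m (m + K)/3.  Injectivity of tau is the combinatorial part:
   (m + s)/3 = (n + t)/3 forces m and n to agree or to be neighbours in each coordinate,
   with s and t on the common edge, and diagonal neighbours are linked through a
   corner cell that avoids the removed middle square. *)

Section SierpinskiCarpet.
Variable R : realType.

Lemma expN3S n : 3 ^- n.+1 = 3 ^- n / 3 :> R.
Proof. by rewrite exprS invfM mulrC. Qed.

Lemma expN3_gt0 n : 0 < 3 ^- n :> R.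
Proof. by rewrite invr_gt0 exprn_gt0. Qed.

Lemma expN3_lt (e : R) : 0 < e -> exists n, 3 ^- n < e.
Proof.
move=> e_gt0; have /archi_boundP : 0 <= e^-1 by rewrite invr_ge0 ltW.
set n := Num.Def.archi_bound _ => ltn; exists n.
rewrite -[e]invrK ltf_pV2 ?posrE ?exprn_gt0 ?invr_gt0 //.
by rewrite (lt_le_trans ltn) // -natrX ler_nat ltnW // ltn_expl.
Qed.

Lemma eq0_le_expN3 (V : normedZmodType R) (x : V) (B : R) :
  (forall n, `|x| <= B * 3 ^- n) -> x = 0.
Proof.
move=> le_x; apply/normr0_eq0/eqP; rewrite eq_le normr_ge0 andbT leNgt.
apply/negP => x_gt0.
have B_gt0 : 0 < B by have := le_x 0%N; rewrite expr0 invr1 mulr1; apply: lt_le_trans.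
have [n ltn] := expN3_lt (divr_gt0 x_gt0 B_gt0).
by have := le_x n; rewrite -ler_pdivrMl // mulrC leNgt ltn.
Qed.

Lemma contract_dist m (x y : pt R) :
  `|Defs.contract m x - Defs.contract m y| = `|x - y| / 3.
Proof.
have -> : Defs.contract m x - Defs.contract m y = 3^-1 *: (x - y).
  by rewrite /Defs.contract; congr pair; rewrite /= -[_ *: _]/(_ * _) mulrC; lra.
by rewrite prod_norm_scale gtr0_norm ?invr_gt0 // mulrC.
Qed.

Lemma unitsq_dist_le1 (x y : pt R) : unitsq x -> unitsq y -> `|x - y| <= 1.
Proof.
move=> /andP[/andP[? ?] /andP[? ?]] /andP[/andP[? ?] /andP[? ?]].
by rewrite prod_normE ge_max /= !ler_norml; apply/andP; split; apply/andP; split; lra.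
Qed.

Lemma contract_cell (p : M0pt R) :
  Defs.contract (cell p) (resc (proj1_sig p) (cell p)) = proj1_sig p.
Proof. by case: p => -[p1 p2] hp; rewrite /Defs.contract /resc /=; congr pair; lra. Qed.

Lemma eq_self_similar (T : Type) (f g : T -> pt R) :
  (forall t, unitsq (f t)) -> (forall t, unitsq (g t)) ->
  (forall t, exists m t', f t = Defs.contract m (f t') /\ g t = Defs.contract m (g t')) ->
  f =1 g.
Proof.
move=> f_sq g_sq fg_step.
suff close n t : `|f t - g t| <= 1 * 3 ^- n.
  by move=> t; apply/eqP; rewrite -subr_eq0; apply/eqP/(eq0_le_expN3 (close^~ t)).
elim: n t => [|n IHn] t; first by rewrite expr0 invr1 mulr1 unitsq_dist_le1.
have [m [t' [-> ->]]] := fg_step t.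
by rewrite contract_dist expN3S mulrA ler_pM2r ?invr_gt0.
Qed.

Section InvariantSet.
Variables (K : set (pt R)) (Kne : K !=set0) (Kc : compact K)
  (Ksub : K `<=` @unitsq R) (Kfix : K = hutch K).

Lemma self_similar_in (T : Type) (f : T -> pt R) :
  (forall t, unitsq (f t)) -> (forall t, exists m t', f t = Defs.contract m (f t')) ->
  forall t, K (f t).
Proof.
move=> f_sq f_step.
have near_K n t : exists2 k, K k & `|f t - k| <= 3 ^- n.
  elim: n t => [|n IHn] t.
    have [k Kk] := Kne; exists k => //.
    by rewrite expr0 invr1 unitsq_dist_le1 //; exact: Ksub.
  have [m [t' ->]] := f_step t; have [k Kk le_k] := IHn t'.
  exists (Defs.contract m k); first by rewrite Kfix; exists m => //; exists k.
  by rewrite contract_dist expN3S ler_pM2r ?invr_gt0.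
move=> t; have Kcl : closed K := compact_closed (@norm_hausdorff R _) Kc.
apply: Kcl => B /nbhs_ballP[e e_gt0 eB].
have [n lt_n] := expN3_lt e_gt0; have [k Kk le_k] := near_K n t.
by exists k; split => //; apply: eB; rewrite -ball_normE /= (le_lt_trans le_k).
Qed.

Lemma M0_subset : @M0 R `<=` K.
Proof.
move=> p M0p; apply: (self_similar_in (f := @proj1_sig _ _) _ _ (exist _ p M0p)) => q.
  by case: (proj2_sig q).
by exists (cell q), (exist _ _ (resc_ok q)); rewrite contract_cell.
Qed.

End InvariantSet.

Section Ternary.
Variables (T : Type) (d : T -> nat) (nx : T -> T).
Hypothesis d_le2 : forall t, (d t <= 2)%N.

Fixpoint ternary_trunc n t : R :=
  if n is n'.+1 then ((d t)%:R + ternary_trunc n' (nx t)) / 3 else 0.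

Definition ternary t : R := sup (range (ternary_trunc ^~ t)).

Let digit_02 t : 0 <= ((d t)%:R : R) <= 2.
Proof. by rewrite ler0n /= -[2]/(2%:R : R) ler_nat. Qed.

Lemma ternary_trunc_01 n t : 0 <= ternary_trunc n t <= 1.
Proof.
elim: n t => [|n IHn] t /=; first by rewrite lexx ler01.
have /andP[? ?] := IHn (nx t); have /andP[? ?] := digit_02 t.
by apply/andP; split; lra.
Qed.

Lemma ternary_trunc_le k n t : ternary_trunc k t <= ternary_trunc n t + 3 ^- n.
Proof.
elim: n k t => [|n IHn] [|k] t.
- by rewrite expr0 invr1 add0r ler01.
- by rewrite expr0 invr1 add0r; case/andP: (ternary_trunc_01 k.+1 t).
- by case/andP: (ternary_trunc_01 n.+1 t) => ? _; rewrite addr_ge0 // ltW ?expN3_gt0.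
- by have := IHn k (nx t); rewrite /= expN3S; lra.
Qed.

Lemma ternary_trunc_le_ternary n t : ternary_trunc n t <= ternary t.
Proof.
apply: ub_le_sup; last by exists n.
by exists 1 => _ [k _ <-]; case/andP: (ternary_trunc_01 k t).
Qed.

Lemma ternary_le_trunc n t : ternary t <= ternary_trunc n t + 3 ^- n.
Proof.
apply: ge_sup; first by exists (ternary_trunc 0 t), 0%N.
by move=> _ [k _ <-]; exact: ternary_trunc_le.
Qed.

Lemma ternary_01 t : 0 <= ternary t <= 1.
Proof.
have := ternary_trunc_le_ternary 0 t; have := ternary_le_trunc 0 t.
by rewrite expr0 invr1 /= add0r => -> ->.
Qed.

Lemma ternaryE t : ternary t = ((d t)%:R + ternary (nx t)) / 3.
Proof.
apply/eqP; rewrite -subr_eq0; apply/eqP/(@eq0_le_expN3 _ _ 1) => n.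
have := ternary_trunc_le_ternary n.+1 t; have := ternary_le_trunc n.+1 t.
have := ternary_trunc_le_ternary n (nx t); have := ternary_le_trunc n (nx t).
rewrite /= expN3S mul1r; have := expN3_gt0 n => *.
by rewrite ler_norml; apply/andP; split; lra.
Qed.

End Ternary.

Section Tensor.
Variable X : squaSet R.

Lemma tens_repr (c : MX X) : tens (Defs.repr c).1 (Defs.repr c).2 = c.
Proof.
case: c => P P_eqv; apply: eq_exist.
by rewrite /Defs.repr /=; case: constructive_indefinite_description => -[m x].
Qed.

Lemma eqv_repr_tens m (x : X) : eqv (m, x) (Defs.repr (tens m x)).
Proof.
rewrite /Defs.repr /=; case: constructive_indefinite_description => r /= ->.
exact: rst_refl.
Qed.

Lemma eqv_tens m (x : X) n (y : X) : eqv (m, x) (n, y) -> tens m x = tens n y.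
Proof.
move=> mx_ny; apply: eq_exist; apply: funext => z; apply: propext.
split; last exact: rst_trans.
by apply: rst_trans; apply: rst_sym.
Qed.

Definition boundary_rep (p : pt R) (a : Mty * X) : Prop :=
  exists q, a.2 = sq X q /\ Defs.contract a.1 (proj1_sig q) = p.

Lemma eqv_boundary_rep p a b : eqv a b -> boundary_rep p a -> boundary_rep p b.
Proof.
suff : eqv a b -> (boundary_rep p a <-> boundary_rep p b) by move=> H /H[].
elim=> {a b} [a b [m [n [q [q' [-> [-> [_ e]]]]]]]|a|a b _ [? ?]|a b c _ [? ?] _ [? ?]].
- by split=> -[r [/= /sq_inj <- <-]]; [exists q' | exists q].
- by [].
- by [].
- by split; auto.
Qed.

Lemma boundary_rep_sqMX p : boundary_rep (proj1_sig p) (Defs.repr (sqMX X p)).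
Proof.
apply: eqv_boundary_rep (eqv_repr_tens _ _) _.
by exists (exist _ _ (resc_ok p)); rewrite contract_cell.
Qed.

End Tensor.

Lemma glue_coord (a b : nat) (x y : R) : (a < 3)%N -> (b < 3)%N ->
  0 <= x <= 1 -> 0 <= y <= 1 -> a%:R + x = b%:R + y ->
  a = b /\ x = y \/ (a.+1 = b \/ b.+1 = a) /\ (x = 0 \/ x = 1) /\ (y = 0 \/ y = 1).
Proof.
move=> + + /andP[? ?] /andP[? ?].
case: a => [|[|[|a]]] // _; case: b => [|[|[|b]]] // _; rewrite ?mulr0n ?mulr1n => e.
all: first [by left; split; [|lra] | by right; split; [lia | split; lra] | exfalso; lra].
Qed.

(* The two cells sharing an edge with both diagonal neighbours cannot both be the
   removed middle cell (1,1). *)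
Lemma corner_cell (m n : Mty) : (proj1_sig m).1 != (proj1_sig n).1 ->
  exists c : Mty, proj1_sig c = ((proj1_sig m).1, (proj1_sig n).2) \/
                  proj1_sig c = ((proj1_sig n).1, (proj1_sig m).2).
Proof.
case: m n => -[m1 m2] /and3P[m1_lt m2_lt _] [[n1 n2] /and3P[n1_lt n2_lt _]] /= ne1.
have [/eqP|ne] := eqVneq (m1, n2) (1, 1)%N.
  rewrite xpair_eqE => /andP[/eqP m1E _].
  have ok : [&& (n1 < 3)%N, (m2 < 3)%N & (n1, m2) != (1, 1)%N].
    by rewrite n1_lt m2_lt xpair_eqE -m1E eq_sym (negbTE ne1).
  by exists (exist _ (n1, m2) ok); right.
have ok : [&& (m1 < 3)%N, (n2 < 3)%N & (m1, n2) != (1, 1)%N] by rewrite m1_lt n2_lt.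
by exists (exist _ (m1, n2) ok); left.
Qed.

Section TensorOfCarpet.
Variables (K : set (pt R)) (hM0 : @M0 R `<=` K) (Ksub : K `<=` @unitsq R).
Let X := carpetSq hM0.

Lemma carpet_val_inj : injective (fun s : X => proj1_sig s).
Proof. by move=> [p Kp] [q Kq] /= pq; apply: eq_exist. Qed.

Lemma eqv_contract (a b : Mty * X) : eqv a b ->
  Defs.contract a.1 (proj1_sig a.2) = Defs.contract b.1 (proj1_sig b.2).
Proof.
elim=> {a b} [a b [m [n [p [q [-> [-> [_ e]]]]]]]|a|a b _ ->|a b c _ -> _ ->] //.
Qed.

Lemma sq_M0 (s : X) (M0s : M0 (proj1_sig s)) : sq X (exist _ _ M0s) = s.
Proof. by case: s M0s => p Kp M0p; apply: eq_exist. Qed.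

Lemma eqv_adjacent m n (s t : X) : Defs.adjacent m n ->
  M0 (proj1_sig s) -> M0 (proj1_sig t) ->
  Defs.contract m (proj1_sig s) = Defs.contract n (proj1_sig t) -> eqv (m, s) (n, t).
Proof.
move=> mn M0s M0t e; rewrite -(sq_M0 M0s) -(sq_M0 M0t).
by apply: rst_step; exists m, n, (exist _ _ M0s), (exist _ _ M0t).
Qed.

Lemma eqv_corner (m c n : Mty) (s t : X) :
  proj1_sig c = ((proj1_sig m).1, (proj1_sig n).2) ->
  (proj1_sig m).1.+1 = (proj1_sig n).1 \/ (proj1_sig n).1.+1 = (proj1_sig m).1 ->
  (proj1_sig m).2.+1 = (proj1_sig n).2 \/ (proj1_sig n).2.+1 = (proj1_sig m).2 ->
  M0 (proj1_sig s) -> M0 (proj1_sig t) -> ((proj1_sig s).1 = 0 \/ (proj1_sig s).1 = 1) ->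
  Defs.contract m (proj1_sig s) = Defs.contract n (proj1_sig t) -> eqv (m, s) (n, t).
Proof.
move=> cE mn1 mn2 M0s M0t s1_border [e1 e2].
have M0u : M0 ((proj1_sig s).1, (proj1_sig t).2).
  case: M0s M0t => /andP[? _] _ [/andP[_ ?] _].
  by split; [apply/andP; split | case: s1_border => ->; [left | right; left]].
have [c1E c2E] : (proj1_sig c).1 = (proj1_sig m).1 /\ (proj1_sig c).2 = (proj1_sig n).2.
  by rewrite cE.
apply: (rst_trans _ _ _ (c, exist _ _ (hM0 M0u) : X)).
  apply: eqv_adjacent => //; last by rewrite /Defs.contract /mR /= c1E c2E e2.
  by right; rewrite /= c1E c2E.
apply: eqv_adjacent => //; last by rewrite /Defs.contract /mR /= c1E c2E e1.
by left; rewrite /= c1E c2E.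
Qed.

Lemma contract_eqv m n (s t : X) :
  Defs.contract m (proj1_sig s) = Defs.contract n (proj1_sig t) -> eqv (m, s) (n, t).
Proof.
move=> e; have M0_border (u : X) :
    ((proj1_sig u).1 = 0 \/ (proj1_sig u).1 = 1) \/
    ((proj1_sig u).2 = 0 \/ (proj1_sig u).2 = 1) -> M0 (proj1_sig u).
  by move=> border; split; [exact: Ksub (proj2_sig u) | tauto].
have /andP[s1_01 s2_01] := Ksub (proj2_sig s).
have /andP[t1_01 t2_01] := Ksub (proj2_sig t).
have /and3P[m1_lt m2_lt _] := proj2_sig m; have /and3P[n1_lt n2_lt _] := proj2_sig n.
case: (e) => /(congr1 ( *%R^~ 3)) e1 /(congr1 ( *%R^~ 3)) e2; rewrite !divfK // in e1 e2.
case: (glue_coord m1_lt n1_lt s1_01 t1_01 e1) => [[m1E s1E]|[mn1 [s1B t1B]]];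
case: (glue_coord m2_lt n2_lt s2_01 t2_01 e2) => [[m2E s2E]|[mn2 [s2B t2B]]].
- have -> : m = n.
    by apply: val_inj; rewrite /= [LHS]surjective_pairing m1E m2E -surjective_pairing.
  have -> : s = t.
    by apply: carpet_val_inj; rewrite [LHS]surjective_pairing s1E s2E -surjective_pairing.
  exact: rst_refl.
- by apply: eqv_adjacent (M0_border s _) (M0_border t _) e; [right; split | right | right].
- by apply: eqv_adjacent (M0_border s _) (M0_border t _) e; [left; split | left | left].
- have [|c [cE|cE]] := @corner_cell m n; first by apply/eqP; lia.
    by apply: (eqv_corner cE) => //; apply: M0_border; left.
  apply: rst_sym; apply: (eqv_corner cE) => //; first [tauto | by apply: M0_border; left].
Qed.

Variable Kfix : K = hutch K.

Lemma tau_tens m (s : X) :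
  proj1_sig (tau hM0 Kfix (tens m s)) = Defs.contract m (proj1_sig s).
Proof. exact: esym (eqv_contract (eqv_repr_tens m s)). Qed.

Lemma tau_bij : bijective (tau hM0 Kfix).
Proof.
rewrite -setTT_bijective; split=> //.
  move=> c c' _ _ /(congr1 (fun s : X => proj1_sig s)) e.
  by rewrite -[c]tens_repr -[c']tens_repr; apply/eqv_tens/contract_eqv.
move=> [p Kp] _; have [m _ [k Kk kp]] : hutch K p by rewrite -Kfix.
by exists (tens m (exist _ k Kk : X)) => //; apply: carpet_val_inj; rewrite tau_tens.
Qed.

Lemma tau_sqMX p : tau hM0 Kfix (sqMX X p) = sq X p.
Proof. by apply: carpet_val_inj; rewrite tau_tens contract_cell. Qed.

End TensorOfCarpet.

Section FinalCoalgebra.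
Variables (K : set (pt R)) (Kne : K !=set0) (Kc : compact K)
  (Ksub : K `<=` @unitsq R) (Kfix : K = hutch K) (hM0 : @M0 R `<=` K).
Let X := carpetSq hM0.
Variables (A : squaSet R) (a : A -> MX A) (a_sq : forall p, a (sq A p) = sqMX A p).

Let nx x := (Defs.repr (a x)).2.
Let d1 x := (proj1_sig (Defs.repr (a x)).1).1.
Let d2 x := (proj1_sig (Defs.repr (a x)).1).2.

Let d1_le2 x : (d1 x <= 2)%N.
Proof. by case/and3P: (proj2_sig (Defs.repr (a x)).1). Qed.

Let d2_le2 x : (d2 x <= 2)%N.
Proof. by case/and3P: (proj2_sig (Defs.repr (a x)).1). Qed.

Definition coalg_point x : pt R := (ternary d1 nx x, ternary d2 nx x).

Lemma coalg_pointE x :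
  coalg_point x = Defs.contract (Defs.repr (a x)).1 (coalg_point (nx x)).
Proof. by rewrite {1}/coalg_point (ternaryE nx d1_le2) (ternaryE nx d2_le2). Qed.

Lemma coalg_point_unitsq x : unitsq (coalg_point x).
Proof. by rewrite /unitsq /= !ternary_01. Qed.

Lemma coalg_point_in x : K (coalg_point x).
Proof.
apply: (self_similar_in Kne Kc Ksub Kfix coalg_point_unitsq) => y.
by exists (Defs.repr (a y)).1, (nx y); exact: coalg_pointE.
Qed.

Definition coalg_mor x : X := exist _ _ (coalg_point_in x).

Lemma coalg_mor_sqmor : sqmor coalg_mor.
Proof.
move=> p; apply: carpet_val_inj => /=; move: p.
(* The chosen representative of a (S_A p) is some (m, S_A q) with (m + q)/3 = p,
   so p and coalg_point (S_A p) follow the same addresses. *)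
apply: (eq_self_similar (f := fun p => coalg_point (sq A p)) (g := @proj1_sig _ _)).
- by move=> q; apply: coalg_point_unitsq.
- by move=> q; case: (proj2_sig q).
move=> q; have [q' [nxE qE]] := boundary_rep_sqMX A q; rewrite -a_sq in nxE qE.
by exists (Defs.repr (a (sq A q))).1, q'; rewrite coalg_pointE /nx nxE qE.
Qed.

Variables (tinv : X -> MX X) (tauK : cancel (tau hM0 Kfix) tinv)
  (tinvK : cancel tinv (tau hM0 Kfix)).

Lemma coalg_mor_coalg x : tinv (coalg_mor x) = Mmap coalg_mor (a x).
Proof.
have -> : coalg_mor x = tau hM0 Kfix (Mmap coalg_mor (a x)).
  by apply: carpet_val_inj; rewrite tau_tens /= coalg_pointE.
exact: tauK.
Qed.

Lemma coalg_mor_unique (h : A -> X) :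
  (forall x, tinv (h x) = Mmap h (a x)) -> h = coalg_mor.
Proof.
move=> h_coalg; apply: funext => x; apply: carpet_val_inj; move: x.
apply: eq_self_similar => [x|x|x]; first exact: Ksub (proj2_sig (h x)).
  exact: coalg_point_unitsq.
exists (Defs.repr (a x)).1, (nx x); split; last exact: coalg_pointE.
by rewrite -[h x]tinvK h_coalg tau_tens.
Qed.

End FinalCoalgebra.
End SierpinskiCarpet.

Local Close Scope ring_scope.

Theorem mainTheorem5 (K : set (pt Rdefinitions.R))
  (Kne : K !=set0) (Kc : compact K) (Ksub : K `<=` @unitsq Rdefinitions.R)
  (Kfix : K = hutch K) :
  (@M0 Rdefinitions.R `<=` K) /\
  forall hM0 : @M0 Rdefinitions.R `<=` K,
    bijective (tau hM0 Kfix) /\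
    forall tinv : carpetSq hM0 -> MX (carpetSq hM0),
      cancel (tau hM0 Kfix) tinv -> cancel tinv (tau hM0 Kfix) ->
      is_final_coalg tinv.
Proof.
split; first exact: M0_subset Kne Kc Ksub Kfix.
move=> hM0; split; first exact: tau_bij.
move=> tinv tauK tinvK; split=> [p | A a a_sq].
  by rewrite -tau_sqMX tauK.
exists (coalg_mor Kne Kc Ksub Kfix hM0 a); split=> [|h [_ h_coalg]].
  by split=> [|x]; [exact: coalg_mor_sqmor | exact: coalg_mor_coalg].
by rewrite (coalg_mor_unique Kne Kc Ksub tinvK h_coalg).
Qed.
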